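(* Suppose $\frac1n<R\le\frac2{n+1}$ and let $\ell_1=\lceil 2n-\frac2R+1\rceil-1$. Then for every bid set $B_{\mathcal D}$ of $\mathcal D$ (a multiset of $n$ nonnegative reals with sum $\beta$), $$W(\pi_{\rm unif},B_{\mathcal D})\ge \frac{\ell_1}{n}.$$
   Context: Position-randomized auction with two bidders $\mathcal A$ and $\mathcal D$ and $n\ge1$ objects. $\mathcal D$ has budget $\beta>0$ and $\mathcal A$ has budget $R\beta$ with $R>0$. A bidding algorithm of a bidder is a pair $(\pi,B)$: $B$ (the bid set) is a multiset of $n$ nonnegative reals whose sum is at most the bidder's budget, and $\pi$ is a randomized algorithm permuting sequences of length $n$. Applying $\pi$ to a listing of $B$ gives the final bid sequence, whose $i$-th entry is the bid on object $i$. The two bidders' permutations are independent. Each object goes to the higher bid; on a tie each bidder wins it with probability $1/2$. $w(\pi_{\mathcal A},\pi_{\mathcal D},B_{\mathcal A},B_{\mathcal D})$ is the expected number of objects won by $\mathcal A$. $W(\pi_{\mathcal D},B_{\mathcal D})$ is its supremum over all bidding algorithms $(\pi_{\mathcal A},B_{\mathcal A})$ of $\mathcal A$. $\pi_{\rm unif}$ applies a uniformly random permutation. *)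

From HB Require Import structures.
From mathcomp Require Import all_boot all_order all_algebra all_fingroup.
From mathcomp Require Import classical_sets reals.
Set Implicit Arguments. Unset Strict Implicit. Unset Printing Implicit Defensive.
Import Order.TTheory GRing.Theory Num.Theory.
Local Open Scope ring_scope.
Local Open Scope classical_set_scope.

Section Auction.
Variables (R : realType) (n : nat).

(* A bid set (multiset of n nonnegative reals, sum at most budget), given by a listing. *)
Definition bid_set (budget : R) (b : 'I_n -> R) : Prop :=
  (forall i, 0 <= b i) /\ \sum_(i < n) b i <= budget.

(* A randomized permutation algorithm: a probability distribution on permutations. *)
Definition perm_dist (p : {perm 'I_n} -> R) : Prop :=
  (forall s, 0 <= p s) /\ \sum_(s : {perm 'I_n}) p s = 1.

Definition pi_unif : {perm 'I_n} -> R := fun _ => (n`!%:R)^-1.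

(* expected number of the object won by A with bids x (of A) and y (of D) *)
Definition win (x y : R) : R := if y < x then 1 else if x == y then 2^-1 else 0.

(* final bid on object i is b (s i) *)
Definition w (pA pD : {perm 'I_n} -> R) (bA bD : 'I_n -> R) : R :=
  \sum_(sA : {perm 'I_n}) \sum_(sD : {perm 'I_n})
     pA sA * pD sD * \sum_(i < n) win (bA (sA i)) (bD (sD i)).

Definition W (budgetA : R) (pD : {perm 'I_n} -> R) (bD : 'I_n -> R) : R :=
  sup [set x | exists pA bA, perm_dist pA /\ bid_set budgetA bA /\ x = w pA pD bA bD].

End Auction.

From HB Require Import structures.
From mathcomp Require Import all_boot all_order all_algebra all_fingroup.
From mathcomp Require Import classical_sets reals.
From mathcomp Require Import ring lra zify.

Set Implicit Arguments.
Unset Strict Implicit.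
Unset Printing Implicit Defensive.
Import Order.TTheory GRing.Theory Num.Theory.
Local Open Scope ring_scope.

(* When D permutes uniformly, A's permutation is irrelevant: A's expected gain is
   (1/n) sum_i sum_j win(a_i, d_j), so it suffices to find two nonnegative bids x, y
   with x + y <= R beta that together beat at least l = l_1 of D's bids.  Sort D's bids
   d_0 <= ... <= d_(n-1).  If d_(l-1) < R beta, a single bid beats l of them; if
   d_k + d_(l-2-k) < R beta for some k, bids just above d_k and d_(l-2-k) beat
   (k+1) + (l-1-k) of them.  Otherwise pairing d_k with d_(l-2-k) gives
   2 beta >= R beta (2n + 1 - l), which contradicts l < 2n + 1 - 2/R. *)

Lemma card_perm_type (T : finType) : #|{perm T}| = (#|T|)`!.
Proof.
rewrite -cardsT -card_perm; apply: eq_card => s.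
by rewrite inE unfold_in; apply/esym/fintype.subsetP => x; rewrite inE.
Qed.

Lemma sumr_perm_app {T : finType} {V : nmodType} (F : T -> V) (i : T) :
  (\sum_(s : {perm T}) F (s i)) *+ #|T| = (\sum_j F j) *+ (#|T|)`!.
Proof.
have indep j : \sum_(s : {perm T}) F (s j) = \sum_(s : {perm T}) F (s i).
  rewrite (reindex_inj (mulgI (tperm i j))) /=.
  by apply: eq_bigr => s _; rewrite permM tpermR.
rewrite -sumr_const -(eq_bigr _ (fun j _ => indep j)) exchange_big /=.
rewrite (eq_bigr (fun _ => \sum_j F j)) ?sumr_const ?card_perm_type // => s _.
by rewrite [RHS](reindex_inj (@perm_inj _ s)).
Qed.

Section Win.
Variable R : realType.
Implicit Types x y : R.

Lemma win_ge0 x y : 0 <= win x y.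
Proof. by rewrite /win; case: ifP => // _; case: ifP => // _; lra. Qed.

Lemma win_le1 x y : win x y <= 1.
Proof. by rewrite /win; case: ifP => // _; case: ifP => // _; lra. Qed.

Lemma win_lt x y : y < x -> win x y = 1.
Proof. by rewrite /win => ->. Qed.

End Win.

Section UniformDefender.
Variables (R : realType) (n : nat).

Lemma pi_unif_dist : perm_dist (@pi_unif R n).
Proof.
split=> [s|]; first by rewrite /pi_unif invr_ge0 ler0n.
rewrite /pi_unif sumr_const card_perm_type card_ord -[_ *+ _]mulr_natl mulfV //.
by rewrite pnatr_eq0 -lt0n fact_gt0.
Qed.

Lemma w_pi_unif (pA : {perm 'I_n} -> R) (bA bD : 'I_n -> R) :
  perm_dist pA ->
  w pA (@pi_unif R n) bA bD = n%:R^-1 * \sum_i \sum_j win (bA i) (bD j).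
Proof.
case=> _; case: n pA bA bD => [|m] pA bA bD pA1.
  by rewrite /w big_ord0 mulr0 big1 // => s _; rewrite big1 // => t _; rewrite big_ord0 mulr0.
have fact_neq0 : (m.+1`!%:R : R) != 0 by rewrite pnatr_eq0 -lt0n fact_gt0.
have unif_mean a i : \sum_(t : {perm 'I_m.+1}) @pi_unif R m.+1 t * win a (bD (t i))
    = m.+1%:R^-1 * \sum_j win a (bD j).
  have n_neq0 : (m.+1%:R : R) != 0 by rewrite pnatr_eq0.
  have := sumr_perm_app (fun j => win a (bD j)) i.
  rewrite card_ord -[_ *+ m.+1]mulr_natr -[_ *+ _`!]mulr_natr => perm_app.
  rewrite /pi_unif -mulr_sumr -[\sum_(s : {perm _}) _](mulfK n_neq0) perm_app.
  by field; rewrite nat1r n_neq0 fact_neq0.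
transitivity (\sum_s pA s * (m.+1%:R^-1 * \sum_i \sum_j win (bA i) (bD j))).
  apply: eq_bigr => s _.
  under eq_bigr do rewrite -mulrA.
  rewrite -mulr_sumr; congr (_ * _).
  under eq_bigr do rewrite mulr_sumr.
  rewrite exchange_big /= mulr_sumr [RHS](reindex_inj (@perm_inj _ s)) /=.
  by apply: eq_bigr => i _; rewrite unif_mean.
by rewrite -mulr_suml pA1 mul1r.
Qed.

Lemma w_le_W (budget : R) (pA : {perm 'I_n} -> R) (bA bD : 'I_n -> R) :
  perm_dist pA -> bid_set budget bA ->
  w pA (@pi_unif R n) bA bD <= W budget (@pi_unif R n) bD.
Proof.
move=> pA_dist bA_bids; apply: ub_le_sup; last by exists pA, bA.
exists (n%:R^-1 * \sum_(i < n) \sum_(j < n) 1) => _ [pA' [bA' [pA'_dist [_ ->]]]].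
rewrite w_pi_unif // ler_wpM2l ?invr_ge0 ?ler0n //.
by do 2!apply: ler_sum => ? _; apply: win_le1.
Qed.

End UniformDefender.

Section SortedBids.
Variables (R : realType) (n : nat) (b : 'I_n -> R).

Let s := sort <=%R [seq b i | i <- enum 'I_n].

Let size_s : size s = n.
Proof. by rewrite size_sort size_map size_enum_ord. Qed.

Let perm_s : perm_eq s [seq b i | i <- enum 'I_n].
Proof. by rewrite perm_sort perm_refl. Qed.

Definition sorted_bid k := nth 0 s k.

Lemma sum_sorted_bid (F : R -> R) : \sum_(k < n) F (sorted_bid k) = \sum_i F (b i).
Proof.
transitivity (\sum_(v <- s) F v); first by rewrite (big_nth 0) size_s big_mkord.
by rewrite (perm_big _ perm_s) big_map big_enum.
Qed.

Lemma sorted_bid_mono k k' : (k <= k')%N -> (k' < n)%N -> sorted_bid k <= sorted_bid k'.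
Proof.
move=> le_kk' lt_k'n; apply: (sorted_leq_nth le_trans lexx) => //.
- exact: sort_sorted le_total _.
- by rewrite inE size_s (leq_ltn_trans le_kk').
- by rewrite inE size_s.
Qed.

Lemma sorted_bid_ge0 : (forall i, 0 <= b i) -> forall k, (k < n)%N -> 0 <= sorted_bid k.
Proof.
move=> b_ge0 k lt_kn; have : sorted_bid k \in s by rewrite mem_nth // size_s.
by rewrite (perm_mem perm_s) => /mapP [i _ ->].
Qed.

Lemma sorted_bid_lt_sum_win m x : (m < n)%N -> sorted_bid m < x ->
  m.+1%:R <= \sum_j win x (b j).
Proof.
move=> lt_mn ltx.
rewrite -sum_sorted_bid -(big_mkord xpredT (fun k => win x (sorted_bid k))).
rewrite (@big_cat_nat _ _ _ m.+1) //= -[leLHS]addr0 lerD ?sumr_ge0 // => [|k _]; last first.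
  exact: win_ge0.
rewrite -{1}(subn0 m.+1) -sumr_const_nat.
apply: ler_sum_nat => k /andP[_]; rewrite ltnS => le_km.
by rewrite win_lt // (le_lt_trans (sorted_bid_mono le_km lt_mn)).
Qed.

Lemma sorted_bid_pair_bound l rho : (l < n)%N -> rho <= sorted_bid l ->
  (forall k, (k < l)%N -> rho <= sorted_bid k + sorted_bid (l - k.+1)) ->
  rho * (2 * n%:R - l%:R) <= 2 * \sum_i b i.
Proof.
move=> lt_ln rho_le pair_ge.
have split_sum : \sum_i b i = \sum_(0 <= k < l) sorted_bid k + \sum_(l <= k < n) sorted_bid k.
  rewrite -(sum_sorted_bid id) -(big_mkord xpredT sorted_bid).
  by rewrite (@big_cat_nat _ _ _ l) //= ltnW.
have high : rho * (n - l)%:R <= \sum_(l <= k < n) sorted_bid k.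
  rewrite mulr_natr -sumr_const_nat; apply: ler_sum_nat => k /andP[le_lk lt_kn].
  exact: le_trans rho_le (sorted_bid_mono le_lk lt_kn).
have low : rho * l%:R <= 2 * \sum_(0 <= k < l) sorted_bid k.
  rewrite mulr_natl mulr2n {2}big_nat_rev -big_split /= mulr_natr -{1}(subn0 l).
  by rewrite -sumr_const_nat; apply: ler_sum_nat => k /andP[_ /pair_ge]; rewrite add0n.
rewrite natrB in high; last exact: ltnW.
rewrite split_sum.
have -> : rho * (2 * n%:R - l%:R) = rho * l%:R + 2 * (rho * (n%:R - l%:R)) by ring.
lra.
Qed.

Lemma exists_two_bids l rho : (forall i, 0 <= b i) -> (l <= n)%N ->
  2 * \sum_i b i < rho * (2 * n%:R + 1 - l%:R) ->
  exists x y, [/\ 0 <= x, 0 <= y, x + y <= rho &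
    l%:R <= \sum_j win x (b j) + \sum_j win y (b j)].
Proof.
move=> b_ge0 le_ln budget_lt.
have sum_win_ge0 x : 0 <= \sum_j win x (b j) by apply: sumr_ge0 => j _; apply: win_ge0.
have rho_gt0 : 0 < rho.
  have coef_gt0 : 0 < 2 * n%:R + 1 - l%:R :> R.
    by move: (ler0n R n) le_ln; rewrite -(ler_nat R); lra.
  rewrite -(pmulr_lgt0 _ coef_gt0); apply: le_lt_trans budget_lt.
  by rewrite mulr_ge0 ?sumr_ge0.
case: l le_ln budget_lt => [|l] lt_ln budget_lt.
  by exists 0, 0; split=> //; [rewrite addr0 ltW | apply: addr_ge0].
have S_ge0 := sorted_bid_ge0 b_ge0.
have [lt_rho|ge_rho] := ltP (sorted_bid l) rho.
  have := S_ge0 l lt_ln; exists rho, 0; split; rewrite ?addr0; try lra.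
  by rewrite (le_trans (sorted_bid_lt_sum_win lt_ln lt_rho)) // lerDl.
have [k lt_pair|ge_pair] := pickP (fun k : 'I_l => sorted_bid k + sorted_bid (l - k.+1) < rho).
  set d := (rho - sorted_bid k - sorted_bid (l - k.+1)) / 2.
  have d_gt0 : 0 < d by rewrite /d; lra.
  have lt_kn : (k < n)%N by move: (ltn_ord k) lt_ln; lia.
  have lt_k'n : (l - k.+1 < n)%N by move: (ltn_ord k) lt_ln; lia.
  have := S_ge0 _ lt_kn; have := S_ge0 _ lt_k'n.
  exists (sorted_bid k + d), (sorted_bid (l - k.+1) + d); split; try (rewrite /d; lra).
  have -> : (l.+1 = k.+1 + (l - k.+1).+1)%N by move: (ltn_ord k); lia.
  by rewrite natrD lerD // sorted_bid_lt_sum_win // ltrDl.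
exfalso; have := sorted_bid_pair_bound lt_ln ge_rho.
have /[swap]/[apply] : forall k, (k < l)%N -> rho <= sorted_bid k + sorted_bid (l - k.+1).
  by move=> k lt_kl; rewrite leNgt; apply/negbT/(ge_pair (Ordinal lt_kl)).
by move: budget_lt; rewrite -addn1 natrD; lra.
Qed.

End SortedBids.

Definition two_bids {V : nmodType} {n : nat} (x y : V) : 'I_n -> V :=
  fun i => if val i == 0%N then x else if val i == 1%N then y else 0.

Lemma sum_two_bids {V W : nmodType} (n : nat) (G : V -> W) (x y : V) : (1 < n)%N ->
  \sum_(i < n) G (two_bids x y i) = G x + G y + G 0 *+ (n - 2).
Proof.
move=> lt1n.
rewrite -(big_mkord xpredT (fun k => G (if k == 0%N then x else if k == 1%N then y else 0))).
rewrite big_ltn ?(ltn_trans _ lt1n) // big_ltn //= addrA -sumr_const_nat.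
by congr (_ + _); apply: eq_big_nat => -[|[|k]].
Qed.

Lemma ratio_bounds (R : realType) (n : nat) (r : R) : (1 <= n)%N ->
  n%:R^-1 < r -> r <= 2 / n.+1%:R -> 1 < r * n%:R /\ r * n.+1%:R <= 2.
Proof.
move=> n_ge1 lt_r le_r; split.
  by rewrite -(ltr_pdivrMr _ _ (_ : 0 < n%:R)) ?mul1r // ltr0n.
by rewrite -(ler_pdivlMr _ _ (_ : 0 < n.+1%:R)) ?ltr0n.
Qed.

Lemma ceil_count (R : realType) (n : nat) (r : R) : 0 < r ->
  1 < r * n%:R -> r * n.+1%:R <= 2 ->
  exists l : nat, [/\ Num.ceil (2 * n%:R - 2 / r + 1) - 1 = l%:Z, (l <= n)%N &
    2 < r * (2 * n%:R + 1 - l%:R)].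
Proof.
move=> r_gt0 lt1rn le_rn2.
have r2 : r * (2 / r) = 2 by rewrite mulrC divfK ?gt_eqF.
set x := 2 * n%:R - 2 / r + 1.
have x_gt0 : 0 < x by rewrite /x; nra.
have [l l_def] : exists l : nat, Num.ceil x - 1 = l%:Z.
  by exists `|Num.ceil x - 1|%N; rewrite gez0_abs // subr_ge0 -gtz0_ge1 ceil_gt0.
have lt_lx : l%:R < x by rewrite -[l%:R]/((l%:Z)%:~R) -l_def ceilB1_lt.
exists l; split=> //.
  by rewrite -ltnS -(ltr_nat R); move: lt_lx; rewrite /x; nra.
by move: lt_lx; rewrite /x; nra.
Qed.

Theorem lemma5 (R : realType) (n : nat) (beta r : R) (bD : 'I_n -> R) :
  (1 <= n)%N -> 0 < beta ->
  (n%:R)^-1 < r -> r <= 2 / (n.+1)%:R ->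
  (forall i, 0 <= bD i) -> \sum_(i < n) bD i = beta ->
  ((Num.ceil (2 * n%:R - 2 / r + 1) - 1)%:~R / n%:R
     <= W (r * beta) (@pi_unif R n) bD).
Proof.
move=> n_ge1 beta_gt0 lt_r le_r bD_ge0 sum_bD.
have [lt1rn le_rn2] := ratio_bounds n_ge1 lt_r le_r.
have r_gt0 : 0 < r by apply: lt_trans lt_r; rewrite invr_gt0 ltr0n.
have lt1n : (1 < n)%N.
  rewrite ltn_neqAle n_ge1 andbT; apply/eqP => n1.
  by move: lt1rn le_rn2; rewrite -n1 mulr1; lra.
have [l [-> le_ln budget]] := ceil_count r_gt0 lt1rn le_rn2.
have budget_beta : 2 * \sum_i bD i < r * beta * (2 * n%:R + 1 - l%:R).
  by rewrite sum_bD mulrAC ltr_pM2r // mulrC.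
have [x [y [x_ge0 y_ge0 le_xy wins]]] := exists_two_bids bD_ge0 le_ln budget_beta.
have bids : bid_set (r * beta) (two_bids x y : 'I_n -> R).
  split; last by rewrite (sum_two_bids id) // mul0rn addr0.
  by move=> i; rewrite /two_bids; case: ifP => // _; case: ifP.
apply: le_trans _ (w_le_W bD (pi_unif_dist R n) bids).
rewrite w_pi_unif; last exact: pi_unif_dist.
rewrite mulrC ler_wpM2l ?invr_ge0 ?ler0n //.
rewrite (sum_two_bids (fun v => \sum_j win v (bD j))) //.
apply: le_trans wins _; rewrite lerDl mulrn_wge0 // sumr_ge0 // => j _.
exact: win_ge0.
Qed.
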